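(* Let $\Gamma=(V,\nu,\mu)$ be a fuzzy graph on $n$ vertices with maximum fuzzy degree $\Delta$ and minimum fuzzy degree $\delta$. Then $$\sigma^*(\Gamma)\le 2n+\frac{(\Delta-\delta)^2}{4}.$$
   Context: A fuzzy graph $\Gamma=(V,\nu,\mu)$ consists of a finite vertex set $V$ with $|V|=n\ge1$, a map $\nu:V\to[0,1]$, and a symmetric map $\mu:V\times V\to[0,1]$ with $\mu(u,v)\le\min(\nu(u),\nu(v))$. The fuzzy degree is $d_\Gamma(v)=\sum_{u\ne v}\mu(v,u)$, the fuzzy size is $\mathrm{ew}(\Gamma)=\frac12\sum_v d_\Gamma(v)$, $\lambda=2\,\mathrm{ew}(\Gamma)/n$, and the fuzzy sigma index is $\sigma^*(\Gamma)=\frac1n\sum_{v}(d_\Gamma(v)-\lambda)^2$. $\Delta=\max_v d_\Gamma(v)$, $\delta=\min_v d_\Gamma(v)$. *)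

From mathcomp Require Import all_boot all_order all_algebra.
Set Implicit Arguments. Unset Strict Implicit. Unset Printing Implicit Defensive.
Import Order.TTheory GRing.Theory Num.Theory.
Local Open Scope ring_scope.

Section FuzzyGraph.
Variables (R : realFieldType) (V : finType).

Definition is_fuzzy_graph (nu : V -> R) (mu : V -> V -> R) : Prop :=
  [/\ (forall v, 0 <= nu v <= 1),
      (forall u v, 0 <= mu u v <= 1),
      (forall u v, mu u v = mu v u) &
      (forall u v, mu u v <= Num.min (nu u) (nu v))].

Definition fdeg (mu : V -> V -> R) (v : V) : R := \sum_(u | u != v) mu v u.

Definition fsize (mu : V -> V -> R) : R := 2^-1 * \sum_v fdeg mu v.

Definition forder : R := #|V|%:R.

Definition flambda (mu : V -> V -> R) : R := 2 * fsize mu / forder.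

Definition fsigma (mu : V -> V -> R) : R :=
  forder^-1 * \sum_v (fdeg mu v - flambda mu) ^+ 2.

(* maximum / minimum fuzzy degree (V nonempty; 0 if V is empty) *)
Definition fmaxdeg (mu : V -> V -> R) : R :=
  if [pick v : V] is Some v0 then \big[Num.max/fdeg mu v0]_v fdeg mu v else 0.
Definition fmindeg (mu : V -> V -> R) : R :=
  if [pick v : V] is Some v0 then \big[Num.min/fdeg mu v0]_v fdeg mu v else 0.

End FuzzyGraph.

From mathcomp Require Import all_boot all_order all_algebra.
From mathcomp Require Import ring lra.
Set Implicit Arguments. Unset Strict Implicit. Unset Printing Implicit Defensive.
Import Order.TTheory GRing.Theory Num.Theory.
Local Open Scope ring_scope.

(* The fuzzy sigma index is the variance of the degree sequence, and by
   Popoviciu's inequality a variance of values lying in [a, b] is at most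
   (b - a)^2 / 4: the mean minimises the mean squared deviation, so the
   variance is at most the mean squared deviation from the midpoint (a + b) / 2,
   which is termwise at most ((b - a) / 2)^2. *)

Section Variance.
Variables (R : realFieldType) (V : finType) (x : V -> R).
Hypothesis V_gt0 : (0 < #|V|)%N.

Definition mean : R := (\sum_v x v) / #|V|%:R.

Let card_gt0 : 0 < #|V|%:R :> R. Proof. by rewrite ltr0n. Qed.

Lemma sum_dev_mean : \sum_v (x v - mean) = 0.
Proof.
rewrite sumrB sumr_const /mean -/#|V| -(mulr_natr (_ / _)) divfK ?subrr //.
by rewrite gt_eqF.
Qed.

Lemma sum_sqr_dev_shift (c : R) :
  \sum_v (x v - c) ^+ 2 = \sum_v (x v - mean) ^+ 2 + #|V|%:R * (mean - c) ^+ 2.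
Proof.
have -> : \sum_v (x v - c) ^+ 2 =
    \sum_v (x v - mean) ^+ 2 + 2 * (mean - c) * \sum_v (x v - mean)
    + \sum_(v : V) (mean - c) ^+ 2.
  by rewrite mulr_sumr -!big_split /=; apply: eq_bigr => v _; ring.
by rewrite sum_dev_mean mulr0 addr0 sumr_const mulr_natl.
Qed.

Lemma sum_sqr_dev_mean_le (c : R) :
  \sum_v (x v - mean) ^+ 2 <= \sum_v (x v - c) ^+ 2.
Proof.
by rewrite (sum_sqr_dev_shift c) lerDl mulr_ge0 ?ler0n ?sqr_ge0.
Qed.

Lemma variance_le_range (a b : R) :
    (forall v, a <= x v <= b) ->
  #|V|%:R^-1 * \sum_v (x v - mean) ^+ 2 <= (b - a) ^+ 2 / 4.
Proof.
move=> x_ab; rewrite ler_pdivrMl // mulrC.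
apply: le_trans (sum_sqr_dev_mean_le ((a + b) / 2)) _.
have -> : (b - a) ^+ 2 / 4 * #|V|%:R = \sum_(v : V) (b - a) ^+ 2 / 4.
  by rewrite sumr_const mulr_natr.
by apply: ler_sum => v _; have /andP[] := x_ab v; nra.
Qed.

End Variance.

Section FuzzyDegrees.
Variables (R : realFieldType) (V : finType) (mu : V -> V -> R).

Lemma fdeg_bounds (v : V) : fmindeg mu <= fdeg mu v <= fmaxdeg mu.
Proof.
rewrite /fmindeg /fmaxdeg; case: pickP => [v0 _|/(_ v)//].
by rewrite bigmin_le le_bigmax.
Qed.

Lemma flambda_mean : flambda mu = mean (fdeg mu).
Proof.
rewrite /flambda /fsize /mean /forder.
by rewrite mulrA divff ?mul1r // pnatr_eq0.
Qed.

Lemma fsigma_variance :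
  fsigma mu = #|V|%:R^-1 * \sum_v (fdeg mu v - mean (fdeg mu)) ^+ 2.
Proof. by rewrite /fsigma flambda_mean. Qed.

End FuzzyDegrees.

Theorem proposition2p7 (R : realFieldType) (V : finType)
    (nu : V -> R) (mu : V -> V -> R) :
  (0 < #|V|)%N ->
  is_fuzzy_graph nu mu ->
  fsigma mu <= 2 * forder R V
              + (fmaxdeg mu - fmindeg mu) ^+ 2 / 4.
Proof.
move=> V_gt0 _.
rewrite fsigma_variance; apply: le_trans (variance_le_range V_gt0 (fdeg_bounds mu)) _.
by rewrite lerDr mulr_ge0 ?ler0n.
Qed.
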